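(* Let $n\ge3$ and consider the path graph on $n$ nodes with Laplacian $L_n$. The path is reachable (observable) from a node $i\in\{2,\dots,n-1\}$ if and only if the matrices $N_{i-1}$ and $N_{n-i}$ have no common eigenvalue. Moreover, the eigenvalues common to these two matrices are exactly the unreachable (unobservable) eigenvalues of $L_n$ from node $i$.
   Context: The path graph on nodes $\{1,\dots,n\}$ has edges $\{i,i+1\}$; $L_n$ is tridiagonal with diagonal $(1,2,\dots,2,1)$ and off-diagonal $-1$. Reachable from node $i$ means the pair $(L_n,e_i)$ is reachable; observable means $(L_n,e_i^T)$ is observable. An unreachable (unobservable) eigenvalue from node $i$ is $\lambda$ such that some $v\ne0$ satisfies $L_nv=\lambda v$ and $(v)_i=0$. For $\nu\ge1$, $N_\nu\in\mathbb{R}^{\nu\times\nu}$ is the tridiagonal matrix with diagonal $(1,2,\dots,2)$ and off-diagonal entries $-1$. *)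

From HB Require Import structures.
From mathcomp Require Import all_boot all_order all_algebra.
From mathcomp Require Import reals.
Set Implicit Arguments. Unset Strict Implicit. Unset Printing Implicit Defensive.
Import Order.TTheory GRing.Theory Num.Theory.
Local Open Scope ring_scope.

(* Nodes 1..n of the paper are represented by 'I_n = {0,...,n-1}
   (paper node k corresponds to ordinal k-1). *)

Definition pathLap (R : nzRingType) (n : nat) : 'M[R]_n :=
  \matrix_(i < n, j < n)
    if i == j then (if (i == 0%N :> nat) || (i == n.-1 :> nat) then 1 else 2%:R)
    else if (i.+1 == j :> nat) || (j.+1 == i :> nat) then -1 else 0.

Definition Nmx (R : nzRingType) (nu : nat) : 'M[R]_nu :=
  \matrix_(i < nu, j < nu)
    if i == j then (if (i == 0%N :> nat) then 1 else 2%:R)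
    else if (i.+1 == j :> nat) || (j.+1 == i :> nat) then -1 else 0.

Definition ecol (R : nzRingType) (n : nat) (i : 'I_n) : 'cV[R]_n := delta_mx i 0.

Definition ctrb_mx (R : nzRingType) (n : nat) (A : 'M[R]_n) (b : 'cV[R]_n)
  : 'M[R]_n := \matrix_(i < n, j < n) (A ^+ j *m b) i 0.

Definition obsv_mx (R : nzRingType) (n : nat) (A : 'M[R]_n) (c : 'rV[R]_n)
  : 'M[R]_n := \matrix_(i < n, j < n) (c *m A ^+ i) 0 j.

Definition reachable (R : fieldType) (n : nat) (A : 'M[R]_n) (b : 'cV[R]_n) :=
  \rank (ctrb_mx A b) = n.

Definition observable (R : fieldType) (n : nat) (A : 'M[R]_n) (c : 'rV[R]_n) :=
  \rank (obsv_mx A c) = n.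

Definition unreachable_eig (R : nzRingType) (n : nat) (i : 'I_n) (lam : R) :=
  exists v : 'cV[R]_n, [/\ v != 0, pathLap R n *m v = lam *: v & v i 0 = 0].

Definition unobservable_eig (R : nzRingType) (n : nat) (i : 'I_n) (lam : R) :=
  exists v : 'cV[R]_n, [/\ v != 0, pathLap R n *m v = lam *: v & v i 0 = 0].

Definition is_eig (R : fieldType) (m : nat) (A : 'M[R]_m) (lam : R) :=
  eigenvalue A lam.

From HB Require Import structures.
From mathcomp Require Import all_boot all_order all_algebra.
From mathcomp Require Import reals complex.
From mathcomp Require Import zify ring.
Import Order.TTheory GRing.Theory Num.Theory.
Set Implicit Arguments. Unset Strict Implicit. Unset Printing Implicit Defensive.
Local Open Scope ring_scope.

(* An eigenvector v of L_n with v_i = 0 splits at node i into an eigenvector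
   of N_(i-1) (the entries before i) and, read backwards, one of N_(n-i) (the
   entries after i), with the same eigenvalue.  Neither piece vanishes, since
   a solution of the three-term recurrence that is zero at two consecutive
   nodes is zero everywhere; conversely, two such eigenvectors glue, after
   scaling, into an eigenvector of L_n vanishing at i.  Since L_n is real
   symmetric, (L_n, e_i) is reachable iff no eigenvector of L_n is orthogonal
   to e_i: a left null vector w of the controllability matrix spans, with its
   images under L_n, an invariant subspace orthogonal to e_i, and that
   subspace contains an eigenvector because the eigenvalues of L_n are real.
   Observability is reachability of the transposed pair. *)

Section TridiagonalSequences.
Variable R : comNzRingType.
Implicit Types (s : nat -> R) (d : nat -> R) (lam : R).

Definition prev s k := if k is k'.+1 then s k' else 0.

Definition tridiag_app d s r := d r * s r - s r.+1 - prev s r.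

Definition tridiag_eigseq d n s lam :=
  forall r, (r < n)%N -> tridiag_app d s r = lam * s r.

Definition supported n s := forall k, (n <= k)%N -> s k = 0.

Definition trunc n s k := if (k < n)%N then s k else 0.

Definition rev n s k := if (k < n)%N then s (n.-1 - k)%N else 0.

Definition diagL n k : R := if (k == 0)%N || (k == n.-1) then 1 else 2%:R.

Definition diagN k : R := if (k == 0)%N then 1 else 2%:R.

Lemma tridiag_appB d c1 c2 s1 s2 r :
  tridiag_app d (fun k => c1 * s1 k - c2 * s2 k) r =
  c1 * tridiag_app d s1 r - c2 * tridiag_app d s2 r.
Proof. by rewrite /tridiag_app; case: r => [|r] /=; ring. Qed.

Lemma eq_tridiag_eigseq d n s1 s2 lam : s1 =1 s2 ->
  tridiag_eigseq d n s1 lam -> tridiag_eigseq d n s2 lam.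
Proof.
move=> eq_s eig1 r hr; rewrite -!eq_s -eig1 // /tridiag_app !eq_s.
by case: r {hr} => //= r; rewrite eq_s.
Qed.

Lemma trunc_id n s : supported n s -> trunc n s =1 s.
Proof. by move=> s_supp k; rewrite /trunc; case: ltnP => // hk; rewrite s_supp. Qed.

Lemma tridiag_eigseq_eq0 d n s lam k : (k < n)%N ->
  supported n s -> tridiag_eigseq d n s lam -> s k = 0 -> s k.+1 = 0 ->
  forall j, s j = 0.
Proof.
move=> hk s_supp s_eig sk0 sk1.
have prev_eq0 r : (r < n)%N -> s r = 0 -> s r.+1 = 0 -> prev s r = 0.
  move=> hr sr0 sr1.
  by move/eqP: (s_eig r hr); rewrite /tridiag_app sr0 sr1 !mulr0 subr0 sub0r oppr_eq0 => /eqP.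
have next_eq0 r : prev s r = 0 -> s r = 0 -> s r.+1 = 0.
  move=> sp0 sr0; case: (ltnP r n) => hr; last by apply: s_supp; lia.
  by move/eqP: (s_eig r hr); rewrite /tridiag_app sp0 sr0 !mulr0 subr0 sub0r oppr_eq0 => /eqP.
have below m : s (k - m)%N = 0 /\ s (k - m)%N.+1 = 0.
  elim: m => [|m]; first by rewrite subn0.
  rewrite subnS; have : (k - m < n)%N by lia.
  case: (k - m)%N => [|r] hr [IH0 IH1] //=; split=> //.
  exact: prev_eq0 hr IH0 IH1.
have above m : s (k + m)%N = 0 /\ s (k + m)%N.+1 = 0.
  elim: m => [|m [IH0 IH1]]; first by rewrite addn0.
  by rewrite addnS; split=> //; apply: (next_eq0 (k + m).+1).
move=> j; case: (leqP j k) => hj.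
  by have [] := below (k - j)%N; rewrite subKn.
by have [] := above (j - k)%N; rewrite subnKC // ltnW.
Qed.

Lemma diagL_rev n r : (r < n)%N -> diagL n (n.-1 - r)%N = diagL n r.
Proof.
move=> hr; rewrite /diagL orbC; congr (if _ then _ else _).
by congr orb; apply/eqP/eqP; lia.
Qed.

Lemma tridiag_app_rev n s r : supported n s -> (r < n)%N ->
  tridiag_app (diagL n) (rev n s) r = tridiag_app (diagL n) s (n.-1 - r)%N.
Proof.
move=> s_supp hr; rewrite /tridiag_app diagL_rev // {1}/rev hr.
have -> : rev n s r.+1 = prev s (n.-1 - r)%N.
  rewrite /rev; case: ltnP => hr1; first by rewrite (_ : n.-1 - r = (n.-1 - r.+1).+1)%N //; lia.
  by rewrite (_ : n.-1 - r = 0)%N //; lia.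
have -> : prev (rev n s) r = s (n.-1 - r)%N.+1.
  case: r hr => [|r] hr /=; first by rewrite s_supp //; lia.
  by rewrite /rev ifT; [congr s|]; lia.
by rewrite [LHS]addrAC.
Qed.

Lemma tridiag_eigseq_rev n s lam : supported n s ->
  tridiag_eigseq (diagL n) n s lam -> tridiag_eigseq (diagL n) n (rev n s) lam.
Proof.
move=> s_supp s_eig r hr; rewrite tridiag_app_rev // s_eig; last lia.
by rewrite /rev hr.
Qed.

Lemma tridiag_app_left a n s lam r : (a.+1 < n)%N ->
  supported a s -> tridiag_eigseq diagN a s lam ->
  tridiag_app (diagL n) s r = lam * s r - (r == a)%:R * s a.-1.
Proof.
move=> han s_supp s_eig.
case: (ltngtP r a) => hra.
- have dLN : diagL n r = diagN r.
    by rewrite /diagL /diagN; case: eqP => //= _; rewrite ifF //; apply/eqP; lia.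
  by rewrite mul0r subr0 -s_eig // /tridiag_app dLN.
- have sr0 k : (r <= k)%N -> s k = 0 by move=> hk; apply: s_supp; lia.
  rewrite /tridiag_app (sr0 r) // (sr0 r.+1) // !mulr0 mul0r !subr0 sub0r.
  by case: r hra {sr0} => // r hra /=; rewrite s_supp ?oppr0.
- rewrite /tridiag_app hra (s_supp a) // (s_supp a.+1) // !mulr0 mul1r !sub0r.
  by rewrite oppr0 sub0r; case: a s_supp {s_eig hra han} => [|a] s_supp //=; rewrite s_supp ?oppr0.
Qed.

Lemma tridiag_eigseq_trunc a n s lam : (a < n)%N -> s a = 0 ->
  tridiag_eigseq (diagL n) n s lam -> tridiag_eigseq diagN a (trunc a s) lam.
Proof.
move=> han sa0 s_eig r hra; rewrite {2}/trunc hra -s_eig; last lia.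
rewrite /tridiag_app {1}/trunc hra; congr (_ * _ - _ - _).
- by rewrite /diagL /diagN; case: eqP => //= _; rewrite ifF //; apply/eqP; lia.
- by rewrite /trunc; case: ltnP => // hr1; rewrite (_ : r.+1 = a) //; lia.
- by case: r hra => //= r hra; rewrite /trunc ifT //; lia.
Qed.

(* Combines an eigen-sequence of N_a with the mirror image of one of N_b,
   weighted so that their defects at the middle node a cancel. *)
Definition glue n a b sx sy k := sy b.-1 * sx k - sx a.-1 * rev n sy k.

Lemma tridiag_eigseq_glue n a b sx sy lam : n = (a + b).+1 -> (0 < a)%N -> (0 < b)%N ->
  supported a sx -> supported b sy ->
  tridiag_eigseq diagN a sx lam -> tridiag_eigseq diagN b sy lam ->
  tridiag_eigseq (diagL n) n (glue n a b sx sy) lam.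
Proof.
move=> hn ha hb sx_supp sy_supp sx_eig sy_eig r hr.
have sy_suppn : supported n sy by move=> k hk; apply: sy_supp; lia.
rewrite tridiag_appB (tridiag_app_left _ _ sx_supp sx_eig); last lia.
rewrite tridiag_app_rev // (tridiag_app_left _ _ sy_supp sy_eig); last lia.
have -> : (n.-1 - r == b)%N = (r == a) by apply/eqP/eqP; lia.
have -> : sy (n.-1 - r)%N = rev n sy r by rewrite /rev hr.
rewrite /glue; ring.
Qed.

End TridiagonalSequences.

Arguments diagL {R} n k.
Arguments diagN {R} k.

Section TridiagonalMatrices.
Variable R : comNzRingType.
Implicit Types (d : nat -> R) (lam : R).

(* The entries of a column vector as a sequence, extended by 0 beyond n. *)
Definition colseq n (v : 'cV[R]_n) k := \sum_(j < n | j == k :> nat) v j 0.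

Definition tridiag n d : 'M[R]_n :=
  \matrix_(i, j) if i == j then d i
                 else if (i.+1 == j :> nat) || (j.+1 == i :> nat) then -1 else 0.

Lemma pathLapE n : pathLap R n = tridiag n (diagL n).
Proof. by []. Qed.

Lemma NmxE n : Nmx R n = tridiag n diagN.
Proof. by []. Qed.

Lemma tridiag_tr n d : (tridiag n d)^T = tridiag n d.
Proof.
apply/matrixP => a b; rewrite !mxE.
by have [->|_] := eqVneq a b; [|rewrite eq_sym orbC].
Qed.

Lemma colseqE n (v : 'cV[R]_n) (j : 'I_n) : colseq v j = v j 0.
Proof. by rewrite /colseq (big_pred1 j) // => k; rewrite inE. Qed.

Lemma colseq_supported n (v : 'cV[R]_n) : supported n (colseq v).
Proof.
move=> k hk; rewrite /colseq big_pred0 // => j.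
by apply/negbTE; apply: contraTneq (ltn_ord j) => ->; rewrite -leqNgt.
Qed.

Lemma colseq_col n (f : nat -> R) : colseq (\col_(k < n) f k) =1 trunc n f.
Proof.
move=> k; rewrite /trunc; case: ltnP => hk; last exact: colseq_supported.
by rewrite (colseqE _ (Ordinal hk)) mxE.
Qed.

Lemma colseq0 n k : colseq (0 : 'cV[R]_n) k = 0.
Proof. by rewrite /colseq big1 // => j _; rewrite mxE. Qed.

Lemma colseq_eq0 n (v : 'cV[R]_n) : (forall k, colseq v k = 0) -> v = 0.
Proof. by move=> v0; apply/matrixP => j z; rewrite ord1 -colseqE v0 mxE. Qed.

Lemma tridiag_mulmxE n d (v : 'cV[R]_n) (r : 'I_n) :
  (tridiag n d *m v) r 0 = tridiag_app d (colseq v) r.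
Proof.
have colseq_sum k : colseq v k = \sum_(j < n) (if j == k :> nat then v j 0 else 0).
  by rewrite /colseq big_mkcond.
have prevE : prev (colseq v) r = \sum_(j < n) (if j.+1 == r :> nat then v j 0 else 0).
  by case: (nat_of_ord r) => [|k] /=; [rewrite big1 | exact: colseq_sum].
rewrite mxE /tridiag_app prevE !colseq_sum mulr_sumr -!sumrB.
apply: eq_bigr => j _; rewrite !mxE eq_sym.
have [->|/negbTE jr] := eqVneq j r; first by rewrite !eqxx !ifF ?subr0 //; apply/eqP; lia.
rewrite -val_eqE /= in jr; rewrite jr mulr0 sub0r.
rewrite [r.+1 == _]eq_sym.
by case: eqP => jr1; case: eqP => jr2 /=; [lia | ring..].
Qed.

Lemma tridiag_eigvecP n d (v : 'cV[R]_n) lam :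
  tridiag n d *m v = lam *: v <-> tridiag_eigseq d n (colseq v) lam.
Proof.
split=> [eig r hr|eig].
  have := congr1 (fun M : 'cV_n => M (Ordinal hr) 0) eig.
  by rewrite /= tridiag_mulmxE mxE -(colseqE v (Ordinal hr)).
apply/matrixP => r z; rewrite ord1 tridiag_mulmxE mxE -colseqE.
exact: eig (ltn_ord r).
Qed.

Lemma tridiag_col_eigvecP n d (f : nat -> R) lam :
  tridiag n d *m \col_(k < n) f k = lam *: \col_(k < n) f k <->
  tridiag_eigseq d n (trunc n f) lam.
Proof.
rewrite tridiag_eigvecP.
by split; apply: eq_tridiag_eigseq => k; rewrite colseq_col.
Qed.

End TridiagonalMatrices.

Section CommonEigenvalues.
Variable R : fieldType.

Lemma tridiag_eigvec_last_neq0 m (x : 'cV[R]_m) lam : (0 < m)%N -> x != 0 ->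
  tridiag_eigseq diagN m (colseq x) lam -> colseq x m.-1 != 0.
Proof.
move=> hm xnz x_eig; apply: contra_neq xnz => x_last; apply: colseq_eq0.
apply: (tridiag_eigseq_eq0 _ (colseq_supported x) x_eig x_last); first by rewrite prednK.
by rewrite prednK // colseq_supported.
Qed.

Variables (n : nat) (i : 'I_n) (lam : R).
Hypotheses (i_gt0 : (0 < i)%N) (i_lt : (i.+1 < n)%N).
Let b := (n - 1 - i)%N.
Let n_split : n = (i + b).+1. Proof. rewrite /b; lia. Qed.

Lemma unreachable_eig_glue :
  (exists2 x : 'cV[R]_i, x != 0 & Nmx R i *m x = lam *: x) ->
  (exists2 y : 'cV[R]_b, y != 0 & Nmx R b *m y = lam *: y) ->
  unreachable_eig i lam.
Proof.
rewrite !NmxE => -[x xnz /tridiag_eigvecP x_eig] [y ynz /tridiag_eigvecP y_eig].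
have b_gt0 : (0 < b)%N by rewrite /b; lia.
have x_last := tridiag_eigvec_last_neq0 i_gt0 xnz x_eig.
have y_last := tridiag_eigvec_last_neq0 b_gt0 ynz y_eig.
set s := glue n i b (colseq x) (colseq y).
have s_supp : supported n s.
  move=> k hk; rewrite /s /glue /rev ltnNge hk /= (@colseq_supported _ _ x k) ?mulr0 ?subr0 //; lia.
exists (\col_(k < n) s k); split.
- apply: contra_neq (mulf_neq0 y_last x_last) => s0.
  have := colseq_col n s i.-1; rewrite s0 /trunc ifT; last lia.
  rewrite /s /glue /rev ifT; last lia.
  by rewrite colseq0 (@colseq_supported _ _ y (n.-1 - i.-1)%N) ?mulr0 ?subr0 => [<-|]; last lia.
- rewrite pathLapE tridiag_col_eigvecP.
  apply: eq_tridiag_eigseq (tridiag_eigseq_glue n_split i_gt0 b_gt0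
    (colseq_supported x) (colseq_supported y) x_eig y_eig).
  by move=> k; rewrite trunc_id.
- rewrite mxE /s /glue /rev ltn_ord (@colseq_supported _ _ x i) //.
  by rewrite (@colseq_supported _ _ y (n.-1 - i)%N) ?mulr0 ?subr0 //; lia.
Qed.

Lemma unreachable_eig_split : unreachable_eig i lam ->
  (exists2 x : 'cV[R]_i, x != 0 & Nmx R i *m x = lam *: x) /\
  (exists2 y : 'cV[R]_b, y != 0 & Nmx R b *m y = lam *: y).
Proof.
case=> v []; rewrite pathLapE => vnz /tridiag_eigvecP s_eig vi0; set s := colseq v in s_eig.
have s_supp : supported n s := colseq_supported v.
have si0 : s i = 0 by rewrite /s colseqE.
have s_nz k : (k < n)%N -> s k = 0 -> s k.+1 = 0 -> False.
  move=> hk sk0 sk1; move/eqP: vnz; apply; apply: colseq_eq0.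
  exact: tridiag_eigseq_eq0 hk s_supp s_eig sk0 sk1.
rewrite !NmxE; split.
- exists (\col_(k < i) s k); last first.
    by apply/tridiag_col_eigvecP; apply: tridiag_eigseq_trunc.
  apply/eqP => x0; apply: (s_nz i.-1); [lia| |by rewrite prednK].
  have := colseq_col i s i.-1; rewrite x0 colseq0 /trunc ifT; last lia.
  by move->.
- exists (\col_(k < b) rev n s k); last first.
    apply/tridiag_col_eigvecP; apply: (tridiag_eigseq_trunc (n := n)); first lia.
      by rewrite /rev ifT; [rewrite -si0; congr s|]; lia.
    exact: tridiag_eigseq_rev.
  apply/eqP => y0; apply: (s_nz i); [lia|done|].
  have := colseq_col b (rev n s) b.-1; rewrite y0 colseq0 /trunc /rev !ifT; try lia.
  by move->; congr s; lia.
Qed.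

End CommonEigenvalues.

Lemma hermitian_eigenvalue_real (C : numClosedFieldType) n (A : 'M[C]_n) (x : 'rV_n) z :
  A^T = A -> map_mx Num.conj A = A -> x != 0 -> x *m A = z *: x -> z \is Num.real.
Proof.
move=> A_sym A_real xnz xA.
set xc := map_mx Num.conj x^T.
have form_real : ((x *m A *m xc) 0 0)^* = (x *m A *m xc) 0 0.
  have -> : ((x *m A *m xc) 0 0)^* = (map_mx Num.conj (x *m A *m xc)) 0 0 by rewrite [RHS]mxE.
  have xcK : map_mx Num.conj xc = x^T by apply/matrixP => i j; rewrite !mxE conjCK.
  rewrite !map_mxM A_real xcK -[map_mx _ x]trmxK map_trmx -/xc.
  transitivity ((xc^T *m A *m x^T)^T 0 0); first by rewrite [RHS]mxE.
  by rewrite !trmx_mul !trmxK A_sym mulmxA.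
have q_gt0 : 0 < (x *m xc) 0 0 by have := dotmx_is_dotmx xnz; rewrite dotmxE.
move: form_real; rewrite xA -scalemxAl mxE rmorphM /= (conj_Creal (gtr0_real q_gt0)).
by move/(mulIf (lt0r_neq0 q_gt0)); rewrite CrealE => ->.
Qed.

Lemma symmetric_char_poly_dvd_root (R : rcfType) n (A : 'M[R]_n) (p : {poly R}) :
  A^T = A -> p %| char_poly A -> (1 < size p)%N -> exists r, root p r.
Proof.
move=> A_sym p_dvd p_size.
pose f := real_complex R.
have [z pz] : exists z, root (map_poly f p) z.
  by apply/closed_rootP; rewrite size_map_poly; case: (size p) p_size => // [[]].
have : eigenvalue (map_mx f A) z.
  rewrite eigenvalue_root_char -map_char_poly.
  by apply: root_dvdp pz; rewrite dvdp_map.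
case/eigenvalueP => x xA xnz.
have z_real : z \is Num.real.
  apply: hermitian_eigenvalue_real xnz xA; first by rewrite map_trmx A_sym.
  by rewrite -map_mx_comp; apply: eq_map_mx => a; rewrite /= conj_Creal // complex_real.
move: z_real pz {xA}; case: z => a b; rewrite complex_real => /eqP -> pz.
by exists a; move: pz; rewrite -[(a +i* 0)%C]/(f a) /root horner_map fmorph_eq0.
Qed.

Lemma eigenvector_horner_mx (F : fieldType) n (A : 'M[F]_n.+1) (u : 'cV_n.+1) :
  (forall p : {poly F}, p %| char_poly A -> (1 < size p)%N -> exists r, root p r) ->
  u != 0 -> exists lam (q : {poly F}), let v := horner_mx A q *m u in
  [/\ (size q <= n.+1)%N, v != 0 & A *m v = lam *: v].
Proof.
move=> dvd_root unz.
suff /(_ (char_poly A)) : forall p, p %| char_poly A -> p != 0 ->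
    horner_mx A p *m u = 0 -> exists lam (q : {poly F}), let v := horner_mx A q *m u in
    [/\ (size q <= n.+1)%N, v != 0 & A *m v = lam *: v].
  by apply; rewrite ?dvdpp ?monic_neq0 ?char_poly_monic // Cayley_Hamilton mul0mx.
move=> p; have [N] := ubnP (size p); elim: N p => // N IH p p_size p_dvd p_neq0 pu.
have [p_const|p_nconst] := leqP (size p) 1.
  move: pu p_neq0; rewrite [p]size1_polyC // horner_mx_C mul_scalar_mx polyC_eq0.
  by move/eqP; rewrite scalemx_eq0 (negbTE unz) orbF => ->.
have [r /factor_theorem [q p_eq]] := dvd_root p p_dvd p_nconst.
have q_neq0 : q != 0 by apply: contraNneq p_neq0 => q0; rewrite p_eq q0 mul0r.
have p_sizeE : size p = (size q).+1 by rewrite p_eq size_mul ?polyXsubC_eq0 // size_XsubC addn2.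
have q_dvd : q %| char_poly A by apply: dvdp_trans p_dvd; rewrite p_eq dvdp_mulr.
have [qu0|qu_neq0] := eqVneq (horner_mx A q *m u) 0.
  by apply: (IH q) => //; rewrite -ltnS -p_sizeE.
exists r, q; split => //.
  rewrite -ltnS -p_sizeE -(size_char_poly A); apply: dvdp_leq p_dvd.
  by rewrite monic_neq0 ?char_poly_monic.
move: pu; rewrite p_eq mulrC rmorphM /= rmorphB /= horner_mx_X horner_mx_C.
by rewrite -mulmxA mulmxBl mul_scalar_mx => /subr0_eq.
Qed.

Section ControllabilityMatrix.
Variable R : comNzRingType.

Lemma trmxX n (A : 'M[R]_n) k : (A ^+ k)^T = A^T ^+ k.
Proof.
elim: k => [|k IH]; first by rewrite !expr0 trmx1.
by rewrite exprS exprSr -IH -[_ * _]/(_ *m _) trmx_mul.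
Qed.

Lemma mulmx_exp_eigen n (A : 'M[R]_n) (v : 'cV_n) lam k :
  A *m v = lam *: v -> A ^+ k *m v = lam ^+ k *: v.
Proof.
move=> Av; elim: k => [|k IH]; first by rewrite !expr0 mul1mx scale1r.
by rewrite exprSr -[_ * A]/(_ *m A) -mulmxA Av -scalemxAr IH scalerA exprS.
Qed.

Lemma horner_mx_coord_eq0 n (A : 'M[R]_n.+1) (u : 'cV_n.+1) i (q : {poly R}) :
  (forall k, (k < n.+1)%N -> (A ^+ k *m u) i 0 = 0) -> (size q <= n.+1)%N ->
  (horner_mx A q *m u) i 0 = 0.
Proof.
move=> Au0 q_size; rewrite -[q]coefK poly_def rmorph_sum /= mulmx_suml summxE big1 // => k _.
rewrite linearZ /= rmorphXn /= horner_mx_X -scalemxAl mxE Au0 ?mulr0 //.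
exact: leq_trans (ltn_ord k) q_size.
Qed.


Lemma ctrb_mxE n (A : 'M[R]_n) (i : 'I_n) k j : ctrb_mx A (ecol R i) k j = (A ^+ j) k i.
Proof. by rewrite mxE /ecol -colE mxE. Qed.

Lemma obsv_mx_trmx n (A : 'M[R]_n) (b : 'cV_n) : obsv_mx A b^T = (ctrb_mx A^T b)^T.
Proof.
by apply/matrixP => k j; rewrite !mxE; apply: eq_bigr => l _; rewrite -trmxX !mxE mulrC.
Qed.

Lemma ctrb_mx_sym_mulmx n (A : 'M[R]_n) (i : 'I_n) (w : 'rV_n) j : A^T = A ->
  (w *m ctrb_mx A (ecol R i)) 0 j = (A ^+ j *m w^T) i 0.
Proof.
move=> A_sym; rewrite !mxE; apply: eq_bigr => k _.
have symX : (A ^+ j)^T = A ^+ j by rewrite trmxX A_sym.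
by rewrite ctrb_mxE !mxE mulrC -[in LHS]symX mxE.
Qed.

End ControllabilityMatrix.

Lemma observable_trmx (R : fieldType) n (A : 'M[R]_n) (b : 'cV_n) :
  observable A b^T <-> reachable A^T b.
Proof. by rewrite /observable /reachable obsv_mx_trmx mxrank_tr. Qed.

Lemma symmetric_reachableP (R : rcfType) n (A : 'M[R]_n.+1) (i : 'I_n.+1) : A^T = A ->
  reachable A (ecol R i) <->
  ~ exists lam, exists v : 'cV_n.+1, [/\ v != 0, A *m v = lam *: v & v i 0 = 0].
Proof.
move=> A_sym; rewrite /reachable; set C := ctrb_mx A (ecol R i).
have C_free : (\rank C = n.+1) <-> row_free C by rewrite /row_free; split => /eqP.
rewrite C_free; split.
- move=> C_full [lam [v [vnz Av vi0]]].
  have : v^T *m C == 0.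
    apply/eqP/rowP => j; rewrite ctrb_mx_sym_mulmx // trmxK (mulmx_exp_eigen _ Av).
    by rewrite !mxE vi0 mulr0.
  by rewrite mulmx_free_eq0 // trmx_eq0 (negbTE vnz).
- move=> no_eig; rewrite row_free_unit unitmxE unitfE; apply/negP => /det0P [w wnz wC].
  have wTnz : w^T != 0 by rewrite trmx_eq0.
  have [lam [q [q_size vnz Av]]] :=
    eigenvector_horner_mx (fun p => @symmetric_char_poly_dvd_root _ _ A p A_sym) wTnz.
  apply: no_eig; exists lam, (horner_mx A q *m w^T); split=> //.
  apply: horner_mx_coord_eq0 q_size => k hk.
  by rewrite -(ctrb_mx_sym_mulmx i w (Ordinal hk)) // wC mxE.
Qed.

Lemma eigenvalue_trP (R : fieldType) n (A : 'M[R]_n) a :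
  eigenvalue A^T a <-> exists2 x : 'cV_n, x != 0 & A *m x = a *: x.
Proof.
split=> [/eigenvalueP [v vA vnz]|[x xnz Ax]]; last first.
  by apply/eigenvalueP; exists x^T; rewrite ?trmx_eq0 // -trmx_mul Ax linearZ.
by exists v^T; rewrite ?trmx_eq0 // -[A]trmxK -trmx_mul vA linearZ.
Qed.

Theorem mainTheorem6 (R : realType) (n : nat) (i : 'I_n) :
  (3 <= n)%N -> (1 <= i)%N -> (i <= n - 2)%N ->
  (reachable (pathLap R n) (ecol R i) <->
     ~ (exists lam : R, is_eig (Nmx R i) lam /\ is_eig (Nmx R (n - 1 - i)) lam)) /\
  (observable (pathLap R n) (ecol R i)^T <->
     ~ (exists lam : R, is_eig (Nmx R i) lam /\ is_eig (Nmx R (n - 1 - i)) lam)) /\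
  (forall lam : R,
     (is_eig (Nmx R i) lam /\ is_eig (Nmx R (n - 1 - i)) lam) <->
       unreachable_eig i lam) /\
  (forall lam : R,
     (is_eig (Nmx R i) lam /\ is_eig (Nmx R (n - 1 - i)) lam) <->
       unobservable_eig i lam).
Proof.
move=> n_ge3 i_gt0 i_le.
have i_lt : (i.+1 < n)%N by lia.
have common_iff lam : (is_eig (Nmx R i) lam /\ is_eig (Nmx R (n - 1 - i)) lam) <->
    unreachable_eig i lam.
  have NeigP m : is_eig (Nmx R m) lam <-> exists2 x : 'cV_m, x != 0 & Nmx R m *m x = lam *: x.
    by rewrite -eigenvalue_trP NmxE tridiag_tr.
  rewrite !NeigP.
  by split=> [[]|]; [exact: unreachable_eig_glue | exact: unreachable_eig_split].
have reach_iff : reachable (pathLap R n) (ecol R i) <-> ~ exists lam : R, unreachable_eig i lam.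
  case: n i {n_ge3 i_gt0 i_le i_lt common_iff} => [[]//|n i].
  have L_sym : (pathLap R n.+1)^T = pathLap R n.+1 by rewrite pathLapE tridiag_tr.
  exact: symmetric_reachableP i L_sym.
have no_common : (exists lam, is_eig (Nmx R i) lam /\ is_eig (Nmx R (n - 1 - i)) lam) <->
    exists lam : R, unreachable_eig i lam.
  by split=> -[lam /common_iff]; exists lam.
rewrite observable_trmx pathLapE tridiag_tr -pathLapE no_common.
by do !split=> //; apply/common_iff.
Qed.
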